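(* Let $M^2$ be a Riemann surface and $G=g+ih\colon M^2\to\mathbb{C}^4$ a holomorphic map whose real and imaginary parts $g,h\colon M^2\to\mathbb{R}^4$ are conjugate minimal immersions. Then on the open set where $\langle\!\langle G,G\rangle\!\rangle\neq 0$, the map $T\circ G$, with $T(Z)=Z/\langle\!\langle Z,Z\rangle\!\rangle$, is holomorphic and its real and imaginary parts are (at their regular points) again conjugate minimal immersions into $\mathbb{R}^4$.
   Context: $\langle\!\langle\cdot,\cdot\rangle\!\rangle$ denotes the complex bilinear inner product on $\mathbb{C}^4$, $\langle\!\langle Z,W\rangle\!\rangle=\sum_j z_jw_j$. Two immersions $g,h\colon M^2\to\mathbb{R}^4$ are conjugate minimal immersions if $g$ is a conformal minimal immersion and $h_*=g_*\circ J$ for a complex structure $J$ on $M^2$ (up to the sign convention of $J$). *)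

From Stdlib Require Import Reals Lra List.
Open Scope R_scope.

(* Local model: a Riemann surface is locally an open set of C = R^2 with the
   holomorphic coordinate z = x + i y; all notions below are local.
   A map into R^4 is [g : nat -> R -> R -> R], [g j x y] = j-th coordinate
   (only j = 0..3 are used). A map into C^4 is G = g + i h. *)

Definition dot4 (u v : nat -> R) : R :=
  u 0%nat * v 0%nat + u 1%nat * v 1%nat + u 2%nat * v 2%nat + u 3%nat * v 3%nat.

Definition open2 (U : R -> R -> Prop) : Prop :=
  forall x y, U x y -> exists r, 0 < r /\
    forall s t, s * s + t * t < r * r -> U (x + s) (y + t).

Definition cont2_at (f : R -> R -> R) (x y : R) : Prop :=
  forall eps, 0 < eps -> exists delta, 0 < delta /\
    forall s t, s * s + t * t < delta * delta ->
      Rabs (f (x + s) (y + t) - f x y) < eps.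

Definition partial_x (f : R -> R -> R) (x y l : R) : Prop :=
  derivable_pt_lim (fun t => f t y) x l.
Definition partial_y (f : R -> R -> R) (x y l : R) : Prop :=
  derivable_pt_lim (fun t => f x t) y l.

(* C^infinity on W: there is a family of all iterated partial derivatives
   (indexed by words in {d/dx = false, d/dy = true}), all continuous on W. *)
Definition smooth_on (W : R -> R -> Prop) (f : R -> R -> R) : Prop :=
  exists D : list bool -> R -> R -> R, D nil = f /\
    forall w x y, W x y ->
      partial_x (D w) x y (D (false :: w) x y) /\
      partial_y (D w) x y (D (true :: w) x y) /\
      cont2_at (D w) x y.

Definition cdiff_at (u v : R -> R -> R) (x y a b : R) : Prop :=
  forall eps, 0 < eps -> exists delta, 0 < delta /\
    forall s t, s * s + t * t < delta * delta ->
      sqrt ((u (x + s) (y + t) - u x y - (a * s - b * t)) ^ 2 +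
            (v (x + s) (y + t) - v x y - (a * t + b * s)) ^ 2)
      <= eps * sqrt (s * s + t * t).

Definition holomorphic_on (U : R -> R -> Prop) (g h : nat -> R -> R -> R) : Prop :=
  forall j, (j < 4)%nat -> forall x y, U x y ->
    exists a b, cdiff_at (g j) (h j) x y a b.

(* Minimality = vanishing mean
   curvature vector: the normal part of g^{ij} d_i d_j g is zero
   (multiplied by the positive determinant of the metric). *)
Definition conformal_minimal_immersion (W : R -> R -> Prop)
    (g : nat -> R -> R -> R) : Prop :=
  (forall j, (j < 4)%nat -> smooth_on W (g j)) /\
  exists gx gy gxx gxy gyy : nat -> R -> R -> R,
    forall x y, W x y ->
      (forall j, (j < 4)%nat ->
         partial_x (g j) x y (gx j x y) /\ partial_y (g j) x y (gy j x y) /\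
         partial_x (gx j) x y (gxx j x y) /\ partial_y (gx j) x y (gxy j x y) /\
         partial_y (gy j) x y (gyy j x y)) /\
      (forall a b, (forall j, (j < 4)%nat -> a * gx j x y + b * gy j x y = 0) ->
         a = 0 /\ b = 0) /\
      dot4 (fun j => gx j x y) (fun j => gx j x y) =
        dot4 (fun j => gy j x y) (fun j => gy j x y) /\
      dot4 (fun j => gx j x y) (fun j => gy j x y) = 0 /\
      (let E := dot4 (fun j => gx j x y) (fun j => gx j x y) in
       let F := dot4 (fun j => gx j x y) (fun j => gy j x y) in
       let G := dot4 (fun j => gy j x y) (fun j => gy j x y) in
       forall n : nat -> R,
         dot4 n (fun j => gx j x y) = 0 -> dot4 n (fun j => gy j x y) = 0 ->
         dot4 n (fun j => G * gxx j x y - 2 * F * gxy j x y + E * gyy j x y) = 0).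

(* g, h conjugate minimal immersions: g conformal minimal, h smooth and
   h_* = g_* o J up to the sign convention of J (J d/dx = d/dy). *)
Definition conjugate_minimal (W : R -> R -> Prop) (g h : nat -> R -> R -> R) : Prop :=
  conformal_minimal_immersion W g /\
  (forall j, (j < 4)%nat -> smooth_on W (h j)) /\
  exists sgn : R, (sgn = 1 \/ sgn = -1) /\
    forall x y, W x y -> forall j, (j < 4)%nat -> forall dx dy,
      partial_x (g j) x y dx -> partial_y (g j) x y dy ->
      partial_x (h j) x y (sgn * dy) /\ partial_y (h j) x y (- (sgn * dx)).

Definition cmul (z w : R * R) : R * R :=
  (fst z * fst w - snd z * snd w, fst z * snd w + snd z * fst w).
Definition cdiv (z w : R * R) : R * R :=
  let d := fst w * fst w + snd w * snd w in
  ((fst z * fst w + snd z * snd w) / d, (snd z * fst w - fst z * snd w) / d).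

Definition bilG (g h : nat -> R -> R -> R) (x y : R) : R * R :=
  let c := fun j => cmul (g j x y, h j x y) (g j x y, h j x y) in
  (fst (c 0%nat) + fst (c 1%nat) + fst (c 2%nat) + fst (c 3%nat),
   snd (c 0%nat) + snd (c 1%nat) + snd (c 2%nat) + snd (c 3%nat)).

Definition TG_re (g h : nat -> R -> R -> R) : nat -> R -> R -> R :=
  fun j x y => fst (cdiv (g j x y, h j x y) (bilG g h x y)).
Definition TG_im (g h : nat -> R -> R -> R) : nat -> R -> R -> R :=
  fun j x y => snd (cdiv (g j x y, h j x y) (bilG g h x y)).

Definition nonisotropic_set (U : R -> R -> Prop) (g h : nat -> R -> R -> R)
  : R -> R -> Prop :=
  fun x y => U x y /\ bilG g h x y <> (0, 0).

Definition regular_pt (f : nat -> R -> R -> R) (x y : R) : Prop :=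
  exists fx fy : nat -> R,
    (forall j, (j < 4)%nat -> partial_x (f j) x y (fx j) /\ partial_y (f j) x y (fy j)) /\
    (forall a b, (forall j, (j < 4)%nat -> a * fx j + b * fy j = 0) -> a = 0 /\ b = 0).

(* Write Q = <<G, G>>. Holomorphy of G and conformality of g say that G' = g_x - i g_y
   is isotropic: <<G', G'>> = 0. The derivative of T o G = G / Q is
   G' / Q - 2 <<G', G>> G / Q^2, and expanding with <<G, G>> = Q gives
   <<(T o G)', (T o G)'>> = <<G', G'>> / Q^2 = 0, so T o G is again a holomorphic curve
   with isotropic derivative. For any such curve u + i v, isotropy makes u conformal and
   the Cauchy-Riemann equations with the symmetry of second derivatives make u harmonic,
   hence minimal; Cauchy-Riemann also says v_* = u_* o J. Smoothness of T o G holds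
   because C^oo functions are closed under ring operations and under inversion of
   nonvanishing functions. *)

From Stdlib Require Import Reals Lra Lia List ClassicalEpsilon FunctionalExtensionality.
From Coquelicot Require Import Coquelicot.
Open Scope R_scope.

Lemma sum_sq_lt_of_Rabs_lt (r s t : R) :
  0 < r -> Rabs s < r / 2 -> Rabs t < r / 2 -> s * s + t * t < r * r.
Proof.
  intros Hr Hs Ht. pose proof (Rsqr_abs s); pose proof (Rsqr_abs t); unfold Rsqr in *.
  pose proof (Rabs_pos s); pose proof (Rabs_pos t); nra.
Qed.

Lemma Rabs_lt_of_sum_sq_lt (d s t : R) :
  0 < d -> s * s + t * t < d * d -> Rabs s < d /\ Rabs t < d.
Proof.
  intros Hd H. pose proof (Rsqr_abs s); pose proof (Rsqr_abs t); unfold Rsqr in *.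
  pose proof (Rabs_pos s); pose proof (Rabs_pos t); split; nra.
Qed.

Lemma cont2_at_iff (f : R -> R -> R) x y : cont2_at f x y <-> continuity_2d_pt f x y.
Proof.
  split.
  - intros H eps. destruct (H eps (cond_pos eps)) as [d [Hd Hf]].
    assert (Hd2 : 0 < d / 2) by lra.
    exists (mkposreal _ Hd2); simpl. intros u v Hu Hv.
    replace u with (x + (u - x)) by ring. replace v with (y + (v - y)) by ring.
    apply Hf, sum_sq_lt_of_Rabs_lt; auto.
  - intros H eps Heps. destruct (H (mkposreal _ Heps)) as [d Hf].
    exists d. split; [apply cond_pos|]. intros s t Hst.
    destruct (Rabs_lt_of_sum_sq_lt d s t (cond_pos d) Hst).
    apply (Hf (x + s) (y + t)); now replace (x + s - x) with s by ring;
      replace (y + t - y) with t by ring.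
Qed.

Section OpenSets.

Variable N : R -> R -> Prop.
Hypothesis N_open : open2 N.

Lemma open2_locally_x a b : N a b -> locally a (fun z => N z b).
Proof.
  intros Hab. destruct (N_open a b Hab) as [r [Hr H]]. exists (mkposreal r Hr).
  intros z Hz. change (Rabs (z - a) < r) in Hz.
  replace z with (a + (z - a)) by ring. replace b with (b + 0) by ring.
  apply H. pose proof (Rsqr_abs (z - a)); pose proof (Rabs_pos (z - a)); unfold Rsqr in *. nra.
Qed.

Lemma open2_locally_y a b : N a b -> locally b (fun z => N a z).
Proof.
  intros Hab. destruct (N_open a b Hab) as [r [Hr H]]. exists (mkposreal r Hr).
  intros z Hz. change (Rabs (z - b) < r) in Hz.
  replace z with (b + (z - b)) by ring. replace a with (a + 0) by ring.
  apply H. pose proof (Rsqr_abs (z - b)); pose proof (Rabs_pos (z - b)); unfold Rsqr in *. nra.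
Qed.

Lemma open2_locally_2d a b : N a b -> locally_2d N a b.
Proof.
  intros Hab. destruct (N_open a b Hab) as [r [Hr H]].
  assert (Hr2 : 0 < r / 2) by lra. exists (mkposreal _ Hr2); simpl. intros u v Hu Hv.
  replace u with (a + (u - a)) by ring. replace v with (b + (v - b)) by ring.
  apply H, sum_sq_lt_of_Rabs_lt; auto.
Qed.

Lemma open2_nonzero (f : R -> R -> R) :
  (forall x y, N x y -> cont2_at f x y) -> open2 (fun x y => N x y /\ f x y <> 0).
Proof.
  intros Hf x y [Hxy Hn].
  assert (Hc := proj1 (cont2_at_iff f x y) (Hf x y Hxy)).
  destruct (continuity_2d_pt_neq_0 _ _ _ Hc Hn) as [d Hd].
  destruct (N_open x y Hxy) as [r [Hr Hr']].
  assert (Hm : 0 < Rmin r d) by (apply Rmin_glb_lt; [lra | apply cond_pos]).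
  exists (Rmin r d). split; [exact Hm|]. intros s t Hst.
  pose proof (Rmin_l r d); pose proof (Rmin_r r d).
  split.
  - apply Hr'. nra.
  - destruct (Rabs_lt_of_sum_sq_lt _ s t Hm Hst).
    apply Hd; [replace (x + s - x) with s by ring | replace (y + t - y) with t by ring]; lra.
Qed.

End OpenSets.

Section SmoothFunctions.

Variable W : R -> R -> Prop.

Definition has_partials_in (B P : (R -> R -> R) -> Prop) : Prop :=
  forall p, B p ->
    (exists px, P px /\ forall x y, W x y -> partial_x p x y (px x y)) /\
    (exists py, P py /\ forall x y, W x y -> partial_y p x y (py x y)) /\
    (forall x y, W x y -> cont2_at p x y).

Definition derivative_closed (P : (R -> R -> R) -> Prop) : Prop := has_partials_in P P.

(* The family of derivatives of [D [b]] is [w |-> D (w ++ [b])]. *)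
Lemma derivative_closed_smooth_on : derivative_closed (smooth_on W).
Proof.
  intros f [D [D0 HD]]; subst f.
  split; [|split]; [exists (D (false :: nil)) | exists (D (true :: nil)) |].
  - split; [|intros x y Hxy; apply HD; auto].
    exists (fun w => D (w ++ false :: nil)). split; [reflexivity|]. intros w; apply HD.
  - split; [|intros x y Hxy; apply HD; auto].
    exists (fun w => D (w ++ true :: nil)). split; [reflexivity|]. intros w; apply HD.
  - intros x y Hxy; apply HD; auto.
Qed.

Lemma smooth_on_of_derivative_closed (P : (R -> R -> R) -> Prop) f :
  derivative_closed P -> P f -> smooth_on W f.
Proof.
  intros HP Hf.
  assert (Hd : forall (b : bool) (p : {q | P q}), {q : {q | P q} | forall x y, W x y ->
     (if b then partial_y else partial_x) (proj1_sig p) x y (proj1_sig q x y)}).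
  { intros b [p Hp]. apply constructive_indefinite_description.
    destruct (HP p Hp) as [[px [Hpx Hx]] [[py [Hpy Hy]] _]].
    destruct b; [exists (exist _ py Hpy) | exists (exist _ px Hpx)]; auto. }
  pose (F := fix F (w : list bool) : {q | P q} :=
     match w with nil => exist _ f Hf | b :: w' => proj1_sig (Hd b (F w')) end).
  exists (fun w => proj1_sig (F w)). split; [reflexivity|].
  intros w x y Hxy. split; [|split].
  - exact (proj2_sig (Hd false (F w)) x y Hxy).
  - exact (proj2_sig (Hd true (F w)) x y Hxy).
  - destruct (F w) as [p Hp]. exact (proj2 (proj2 (HP p Hp)) x y Hxy).
Qed.

Lemma smooth_on_cont2_at f x y : smooth_on W f -> W x y -> cont2_at f x y.
Proof. intros Hf. exact (proj2 (proj2 (derivative_closed_smooth_on f Hf)) x y). Qed.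

Inductive ring_closure (B : (R -> R -> R) -> Prop) : (R -> R -> R) -> Prop :=
| ring_closure_base p : B p -> ring_closure B p
| ring_closure_const c : ring_closure B (fun _ _ => c)
| ring_closure_plus p q :
    ring_closure B p -> ring_closure B q -> ring_closure B (fun x y => p x y + q x y)
| ring_closure_mult p q :
    ring_closure B p -> ring_closure B q -> ring_closure B (fun x y => p x y * q x y).

Lemma derivative_closed_ring_closure B :
  has_partials_in B (ring_closure B) -> derivative_closed (ring_closure B).
Proof.
  intros HB p Hp.
  induction Hp as [p Hp | c | p q _ IHp _ IHq | p q Hp IHp Hq IHq]; [apply HB; auto | | |].
  - split; [|split]; [exists (fun _ _ => 0) .. |].
    1, 2: split; [apply ring_closure_const | intros x y _; apply derivable_pt_lim_const].
    intros x y _; apply cont2_at_iff, continuity_2d_pt_const.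
  - destruct IHp as [[px [Hpx Px]] [[py [Hpy Py]] Pc]].
    destruct IHq as [[qx [Hqx Qx]] [[qy [Hqy Qy]] Qc]].
    split; [|split].
    + exists (fun x y => px x y + qx x y). split; [apply ring_closure_plus; auto|].
      intros x y Hxy; exact (derivable_pt_lim_plus _ _ _ _ _ (Px x y Hxy) (Qx x y Hxy)).
    + exists (fun x y => py x y + qy x y). split; [apply ring_closure_plus; auto|].
      intros x y Hxy; exact (derivable_pt_lim_plus _ _ _ _ _ (Py x y Hxy) (Qy x y Hxy)).
    + intros x y Hxy; apply cont2_at_iff, continuity_2d_pt_plus; apply cont2_at_iff; auto.
  - destruct IHp as [[px [Hpx Px]] [[py [Hpy Py]] Pc]].
    destruct IHq as [[qx [Hqx Qx]] [[qy [Hqy Qy]] Qc]].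
    split; [|split].
    + exists (fun x y => px x y * q x y + p x y * qx x y).
      split; [apply ring_closure_plus; apply ring_closure_mult; auto|].
      intros x y Hxy; exact (derivable_pt_lim_mult _ _ _ _ _ (Px x y Hxy) (Qx x y Hxy)).
    + exists (fun x y => py x y * q x y + p x y * qy x y).
      split; [apply ring_closure_plus; apply ring_closure_mult; auto|].
      intros x y Hxy; exact (derivable_pt_lim_mult _ _ _ _ _ (Py x y Hxy) (Qy x y Hxy)).
    + intros x y Hxy; apply cont2_at_iff, continuity_2d_pt_mult; apply cont2_at_iff; auto.
Qed.

Lemma smooth_on_ring_closure f : ring_closure (smooth_on W) f -> smooth_on W f.
Proof.
  apply smooth_on_of_derivative_closed, derivative_closed_ring_closure.
  intros p Hp. destruct (derivative_closed_smooth_on p Hp) as [[px [? ?]] [[py [? ?]] ?]].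
  split; [|split]; [exists px | exists py |]; auto using ring_closure_base.
Qed.

Lemma smooth_on_const c : smooth_on W (fun _ _ => c).
Proof. apply smooth_on_ring_closure, ring_closure_const. Qed.

Lemma smooth_on_plus f g :
  smooth_on W f -> smooth_on W g -> smooth_on W (fun x y => f x y + g x y).
Proof. intros; apply smooth_on_ring_closure, ring_closure_plus; apply ring_closure_base; auto. Qed.

Lemma smooth_on_mult f g :
  smooth_on W f -> smooth_on W g -> smooth_on W (fun x y => f x y * g x y).
Proof. intros; apply smooth_on_ring_closure, ring_closure_mult; apply ring_closure_base; auto. Qed.

Lemma partial_x_inv p x y a : partial_x p x y a -> p x y <> 0 ->
  partial_x (fun x y => / p x y) x y (-1 * (a * (/ p x y * / p x y))).
Proof.
  intros H Hn. apply is_derive_Reals. apply is_derive_Reals in H.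
  replace (-1 * (a * (/ p x y * / p x y))) with (- a / (p x y) ^ 2) by (field; auto).
  exact (is_derive_inv (fun t => p t y) x a H Hn).
Qed.

(* [partial_y p x y] is [partial_x] of the transposed function at [(y, x)]. *)
Lemma partial_y_inv p x y a : partial_y p x y a -> p x y <> 0 ->
  partial_y (fun x y => / p x y) x y (-1 * (a * (/ p x y * / p x y))).
Proof. exact (partial_x_inv (fun y x => p x y) y x a). Qed.

(* The partials [- d_x / d^2] and [- d_y / d^2] of [1/d] lie in the ring generated by
   the smooth functions and [1/d]. *)
Lemma smooth_on_inv d :
  smooth_on W d -> (forall x y, W x y -> d x y <> 0) -> smooth_on W (fun x y => / d x y).
Proof.
  intros Hd Hn. set (B := fun p => smooth_on W p \/ p = (fun x y => / d x y)).
  apply (smooth_on_of_derivative_closed (ring_closure B));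
    [| apply ring_closure_base; right; reflexivity].
  apply derivative_closed_ring_closure.
  assert (Hs : forall p, smooth_on W p -> ring_closure B p)
    by (intros p Hp; apply ring_closure_base; left; exact Hp).
  assert (Hi : ring_closure B (fun x y => / d x y))
    by (apply ring_closure_base; right; reflexivity).
  intros p [Hp | ->].
  - destruct (derivative_closed_smooth_on p Hp) as [[px [? ?]] [[py [? ?]] ?]].
    split; [|split]; [exists px | exists py |]; auto.
  - destruct (derivative_closed_smooth_on d Hd) as [[dx [Hdx Dx]] [[dy [Hdy Dy]] Dc]].
    split; [|split].
    + exists (fun x y => -1 * (dx x y * (/ d x y * / d x y))).
      split; [repeat apply ring_closure_mult; auto using ring_closure_const|].
      intros x y Hxy; apply partial_x_inv; auto.
    + exists (fun x y => -1 * (dy x y * (/ d x y * / d x y))).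
      split; [repeat apply ring_closure_mult; auto using ring_closure_const|].
      intros x y Hxy; apply partial_y_inv; auto.
    + intros x y Hxy. apply cont2_at_iff, continuity_2d_pt_inv; [apply cont2_at_iff|]; auto.
Qed.

End SmoothFunctions.

Lemma smooth_on_subset (W W' : R -> R -> Prop) f :
  (forall x y, W' x y -> W x y) -> smooth_on W f -> smooth_on W' f.
Proof. intros Hw [D [H0 H]]. exists D. split; auto. Qed.

Lemma smooth_on_ext (W : R -> R -> Prop) (f f' : R -> R -> R) :
  (forall x y, f x y = f' x y) -> smooth_on W f -> smooth_on W f'.
Proof.
  intros E Hf. replace f' with f; [exact Hf|].
  apply functional_extensionality; intros x; apply functional_extensionality; intros y; apply E.
Qed.

Lemma smooth_on_opp (W : R -> R -> Prop) (f : R -> R -> R) :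
  smooth_on W f -> smooth_on W (fun x y => - f x y).
Proof.
  intros Hf. apply (smooth_on_ext W (fun x y => -1 * f x y)); [intros; ring|].
  apply smooth_on_mult; [apply smooth_on_const | exact Hf].
Qed.

Lemma open2_ext (P Q : R -> R -> Prop) :
  (forall x y, P x y <-> Q x y) -> open2 P -> open2 Q.
Proof.
  intros E HP x y Hxy. destruct (HP x y (proj2 (E x y) Hxy)) as [r [Hr H]].
  exists r. split; [exact Hr|]. intros s t Hst. apply E, H, Hst.
Qed.

Lemma sqrt_lt_iff (A d : R) : 0 <= A -> 0 < d -> sqrt A < d <-> A < d * d.
Proof.
  intros HA Hd. rewrite <- (sqrt_square d) at 1 by lra. split.
  - apply sqrt_lt_0_alt.
  - intros H. apply sqrt_lt_1; nra.
Qed.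

Lemma Rabs_le_sqrt_sum_sq (A B : R) : Rabs A <= sqrt (A ^ 2 + B ^ 2).
Proof.
  rewrite <- sqrt_Rsqr_abs. apply sqrt_le_1; unfold Rsqr; nra.
Qed.

Lemma Rabs_le_sqrt_sum_sq_r (A B : R) : Rabs B <= sqrt (A ^ 2 + B ^ 2).
Proof. rewrite Rplus_comm. apply Rabs_le_sqrt_sum_sq. Qed.

Lemma derivable_pt_lim_of_small_error (f : R -> R) x l :
  (forall eps, 0 < eps -> exists d, 0 < d /\
     forall s, Rabs s < d -> Rabs (f (x + s) - f x - l * s) <= eps * Rabs s) ->
  derivable_pt_lim f x l.
Proof.
  intros H eps Heps. destruct (H (eps / 2)) as [d [Hd Hf]]; [lra|].
  exists (mkposreal d Hd). intros s Hs0 Hs.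
  assert (Hs' : 0 < Rabs s) by (apply Rabs_pos_lt; auto).
  replace ((f (x + s) - f x) / s - l) with ((f (x + s) - f x - l * s) / s) by (field; auto).
  unfold Rdiv. rewrite Rabs_mult, Rabs_inv.
  apply (Rmult_lt_reg_r (Rabs s)); auto.
  rewrite Rmult_assoc, Rinv_l, Rmult_1_r by lra. specialize (Hf s Hs). nra.
Qed.

Lemma cdiff_at_directional u v x y a b : cdiff_at u v x y a b ->
  forall eps, 0 < eps -> exists d, 0 < d /\ forall s, Rabs s < d ->
    Rabs (u (x + s) y - u x y - a * s) <= eps * Rabs s /\
    Rabs (v (x + s) y - v x y - b * s) <= eps * Rabs s /\
    Rabs (u x (y + s) - u x y - (- b) * s) <= eps * Rabs s /\
    Rabs (v x (y + s) - v x y - a * s) <= eps * Rabs s.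
Proof.
  intros H eps Heps. destruct (H eps Heps) as [d [Hd Hf]]. exists d. split; [exact Hd|].
  intros s Hs.
  assert (Hss : s * s + 0 * 0 < d * d /\ 0 * 0 + s * s < d * d).
  { pose proof (Rsqr_abs s); pose proof (Rabs_pos s); unfold Rsqr in *. split; nra. }
  assert (Es : sqrt (s * s + 0 * 0) = Rabs s /\ sqrt (0 * 0 + s * s) = Rabs s).
  { rewrite <- sqrt_Rsqr_abs. unfold Rsqr. split; f_equal; ring. }
  destruct Hss as [Hsx Hsy]. destruct Es as [Ex Ey].
  pose proof (Hf s 0 Hsx) as Kx. pose proof (Hf 0 s Hsy) as Ky.
  rewrite Ex, !Rplus_0_r in Kx. rewrite Ey, !Rplus_0_r in Ky.
  replace (a * s - b * 0) with (a * s) in Kx by ring.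
  replace (a * 0 + b * s) with (b * s) in Kx by ring.
  replace (a * 0 - b * s) with (- b * s) in Ky by ring.
  replace (a * s + b * 0) with (a * s) in Ky by ring.
  split; [|split; [|split]].
  - eapply Rle_trans; [apply Rabs_le_sqrt_sum_sq | exact Kx].
  - eapply Rle_trans; [apply Rabs_le_sqrt_sum_sq_r | exact Kx].
  - eapply Rle_trans; [apply Rabs_le_sqrt_sum_sq | exact Ky].
  - eapply Rle_trans; [apply Rabs_le_sqrt_sum_sq_r | exact Ky].
Qed.

Lemma cdiff_at_partials u v x y a b : cdiff_at u v x y a b ->
  partial_x u x y a /\ partial_x v x y b /\ partial_y u x y (- b) /\ partial_y v x y a.
Proof.
  intros H. pose proof (cdiff_at_directional u v x y a b H) as K.
  split; [|split; [|split]]; apply derivable_pt_lim_of_small_error;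
    intros eps Heps; destruct (K eps Heps) as [d [Hd Hf]]; exists d;
    split; auto; intros s Hs; apply Hf, Hs.
Qed.

Section ComplexDerivatives.

Local Open Scope C_scope.

Definition cplx (u v : R -> R -> R) (z : C) : C := (u (fst z) (snd z), v (fst z) (snd z)).

Definition is_C_derive (f : C -> C) (z l : C) : Prop :=
  @is_derive C_AbsRing (AbsRing_NormedModule C_AbsRing) f z l.

Lemma is_C_derive_plus f g z df dg : is_C_derive f z df -> is_C_derive g z dg ->
  is_C_derive (fun w => f w + g w) z (df + dg).
Proof. exact (@is_derive_plus C_AbsRing (AbsRing_NormedModule C_AbsRing) f g z df dg). Qed.

Lemma is_C_derive_mult f g z df dg : is_C_derive f z df -> is_C_derive g z dg ->
  is_C_derive (fun w => f w * g w) z (df * g z + f z * dg).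
Proof. intros Hf Hg. apply (@is_derive_mult C_AbsRing); auto. intros; apply Cmult_comm. Qed.

Lemma Cmod_sub_le (z w : C) : (Cmod w - Cmod (z - w) <= Cmod z)%R.
Proof.
  pose proof (Cmod_triangle z (- (z - w))) as H.
  replace (z + - (z - w)) with w in H by ring. rewrite Cmod_opp in H. lra.
Qed.

(* On [Cmod (z - w) < r] with [r <= Cmod w / 2] we have [Cmod z > Cmod w / 2], and
   [1/z - 1/w + (z - w)/w^2 = (z - w)^2 / (z w^2)]. *)
Lemma is_C_derive_Cinv (w : C) : w <> 0 -> is_C_derive Cinv w (- / (w * w)).
Proof.
  intros Hw. split; [apply is_linear_scal_l|].
  intros z0 Hz0.
  apply (@is_filter_lim_locally_unique C_AbsRing (AbsRing_NormedModule C_AbsRing)) in Hz0.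
  subst z0. intros eps.
  assert (Hm : (0 < Cmod w)%R) by (apply Cmod_gt_0; auto).
  pose proof (cond_pos eps) as Heps.
  set (r := Rmin (Cmod w / 2) (eps * (Cmod w * Cmod w * Cmod w) / 2)).
  assert (Hr : (0 < r)%R).
  { apply Rmin_glb_lt; [lra|]. unfold Rdiv. repeat apply Rmult_lt_0_compat; auto; lra. }
  exists (mkposreal _ Hr). intros z Hz. change (Cmod (z - w) < r)%R in Hz.
  change (Cmod (/ z - / w - (z - w) * - / (w * w)) <= eps * Cmod (z - w))%R.
  assert (Hzm : (Cmod w / 2 < Cmod z)%R).
  { assert (Hrw : (r <= Cmod w / 2)%R) by apply Rmin_l.
    pose proof (Cmod_sub_le z w). lra. }
  assert (Hz0 : @eq C z 0 -> False) by (intro E; rewrite E, Cmod_0 in Hzm; lra).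
  replace (/ z - / w - (z - w) * - / (w * w)) with ((z - w) * ((z - w) / (z * (w * w))))
    by (field; auto).
  rewrite Cmod_mult, Cmod_div, !Cmod_mult by (repeat apply Cmult_neq_0; auto).
  rewrite (Rmult_comm eps). apply Rmult_le_compat_l; [apply Cmod_ge_0|].
  assert (Hre : (r <= eps * (Cmod w * Cmod w * Cmod w) / 2)%R) by apply Rmin_r.
  apply (Rmult_le_reg_r (Cmod z * (Cmod w * Cmod w))); [apply Rmult_lt_0_compat; nra|].
  unfold Rdiv. rewrite Rmult_assoc, Rinv_l, Rmult_1_r by (apply Rgt_not_eq, Rmult_lt_0_compat; nra).
  nra.
Qed.

Lemma is_C_derive_inv f z df : is_C_derive f z df -> f z <> 0 ->
  is_C_derive (fun w => / f w) z (df * - / (f z * f z)).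
Proof.
  intros Hf Hn. apply (@is_derive_comp C_AbsRing (AbsRing_NormedModule C_AbsRing) Cinv f);
    [apply is_C_derive_Cinv|]; auto.
Qed.

Lemma Cmod_cplx_increment u v x y s t a b :
  Cmod (cplx u v ((x + s)%R, (y + t)%R) - cplx u v (x, y)
        - (((x + s)%R, (y + t)%R) - (x, y)) * (a, b))
  = sqrt ((u (x + s) (y + t) - u x y - (a * s - b * t)) ^ 2
          + (v (x + s) (y + t) - v x y - (a * t + b * s)) ^ 2)%R.
Proof. unfold Cmod, cplx; simpl. f_equal; ring. Qed.

Lemma Cmod_shift x y s t : Cmod (((x + s)%R, (y + t)%R) - (x, y)) = sqrt (s * s + t * t)%R.
Proof. unfold Cmod; simpl. f_equal; ring. Qed.

Lemma cdiff_at_iff u v x y a b :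
  cdiff_at u v x y a b <-> is_C_derive (cplx u v) (x, y) (a, b).
Proof.
  split.
  - intros H. split; [apply is_linear_scal_l|].
    intros z0 Hz0.
    apply (@is_filter_lim_locally_unique C_AbsRing (AbsRing_NormedModule C_AbsRing)) in Hz0.
    subst z0. intros eps. destruct (H eps (cond_pos eps)) as [d [Hd Hf]].
    exists (mkposreal d Hd). intros [z1 z2] Hz.
    change (Cmod ((z1, z2) - (x, y)) < d)%R in Hz.
    change (Cmod (cplx u v (z1, z2) - cplx u v (x, y) - ((z1, z2) - (x, y)) * (a, b))
            <= eps * Cmod ((z1, z2) - (x, y)))%R.
    replace z1 with (x + (z1 - x))%R in * by ring.
    replace z2 with (y + (z2 - y))%R in * by ring.
    rewrite Cmod_cplx_increment, Cmod_shift in *.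
    apply Hf. pose proof (Rle_0_sqr (z1 - x)); pose proof (Rle_0_sqr (z2 - y)); unfold Rsqr in *.
    apply sqrt_lt_iff in Hz; [exact Hz | nra | exact Hd].
  - intros [_ H] eps Heps.
    assert (Hl : @is_filter_lim (AbsRing_NormedModule C_AbsRing)
                   (@locally (AbsRing_UniformSpace C_AbsRing) (x, y)) (x, y)) by (intros P HP; exact HP).
    destruct (H _ Hl (mkposreal _ Heps)) as [d Hd].
    exists d. split; [apply cond_pos|]. intros s t Hst.
    assert (Hb : (Cmod (((x + s)%R, (y + t)%R) - (x, y)) < d)%R).
    { rewrite Cmod_shift. apply sqrt_lt_iff; [nra | apply cond_pos | exact Hst]. }
    specialize (Hd _ Hb).
    change (Cmod (cplx u v ((x + s)%R, (y + t)%R) - cplx u v (x, y)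
                  - (((x + s)%R, (y + t)%R) - (x, y)) * (a, b))
            <= eps * Cmod (((x + s)%R, (y + t)%R) - (x, y)))%R in Hd.
    rewrite Cmod_cplx_increment, Cmod_shift in Hd. exact Hd.
Qed.

End ComplexDerivatives.

Section Inversion.

Local Open Scope C_scope.

Definition cdot4 (u v : nat -> C) : C :=
  u 0%nat * v 0%nat + u 1%nat * v 1%nat + u 2%nat * v 2%nat + u 3%nat * v 3%nat.

(* For a holomorphic [f] with real part [u], [f' = u_x - i u_y]; so [f'] is
   isotropic iff [u] is conformal. *)
Lemma cdot4_isotropic_iff_conformal (ux uy : nat -> R) :
  let p := fun j => (ux j, (- uy j)%R) in
  cdot4 p p = 0 <-> dot4 ux ux = dot4 uy uy /\ dot4 ux uy = 0%R.
Proof.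
  unfold cdot4, dot4; simpl. unfold Cplus, Cmult; simpl. split.
  - intros H. pose proof (f_equal fst H) as H1. pose proof (f_equal snd H) as H2.
    simpl in H1, H2. split; nra.
  - intros [H1 H2]. apply injective_projections; simpl; nra.
Qed.

Definition inversion_derivative (G l : nat -> C) (j : nat) : C :=
  l j / cdot4 G G - G j * (2 * cdot4 l G) / (cdot4 G G * cdot4 G G).

Lemma cdot4_inversion_derivative (G l : nat -> C) : cdot4 G G <> 0 ->
  cdot4 (inversion_derivative G l) (inversion_derivative G l)
  = cdot4 l l / (cdot4 G G * cdot4 G G).
Proof.
  intros HG.
  assert (Hpt : forall (q S : C) j, q <> 0 ->
            l j / q - G j * (2 * S) / (q * q) = / (q * q) * (l j * q - G j * (2 * S)))
    by (intros q S j Hq; field; exact Hq).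
  assert (Hscale : forall (c : C) (u : nat -> C),
            cdot4 (fun j => c * u j) (fun j => c * u j) = c * c * cdot4 u u)
    by (intros; unfold cdot4; ring).
  assert (Hnum : forall q S : C,
            cdot4 (fun j => l j * q - G j * (2 * S)) (fun j => l j * q - G j * (2 * S))
            = q * q * cdot4 l l - 4 * q * S * cdot4 l G + 4 * S * S * cdot4 G G)
    by (intros; unfold cdot4; ring).
  transitivity (cdot4 (fun j => / (cdot4 G G * cdot4 G G) * (l j * cdot4 G G - G j * (2 * cdot4 l G)))
                      (fun j => / (cdot4 G G * cdot4 G G) * (l j * cdot4 G G - G j * (2 * cdot4 l G)))).
  - unfold cdot4 at 1 4. unfold inversion_derivative. rewrite !Hpt by exact HG. reflexivity.
  - rewrite Hscale, Hnum. revert HG. generalize (cdot4 G G) (cdot4 l G) (cdot4 l l).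
    intros q S L Hq. field. exact Hq.
Qed.

Lemma is_C_derive_cdot4_self (F : nat -> C -> C) (z : C) (l : nat -> C) :
  (forall k, (k < 4)%nat -> is_C_derive (F k) z (l k)) ->
  is_C_derive (fun w => cdot4 (fun k => F k w) (fun k => F k w)) z
    (2 * cdot4 l (fun k => F k z)).
Proof.
  intros Hl.
  assert (Hsq : forall k, (k < 4)%nat ->
            is_C_derive (fun w => F k w * F k w) z (l k * F k z + F k z * l k))
    by (intros k Hk; apply is_C_derive_mult; auto).
  replace (2 * cdot4 l (fun k => F k z)) with
    (l 0%nat * F 0%nat z + F 0%nat z * l 0%nat + (l 1%nat * F 1%nat z + F 1%nat z * l 1%nat)
     + (l 2%nat * F 2%nat z + F 2%nat z * l 2%nat) + (l 3%nat * F 3%nat z + F 3%nat z * l 3%nat))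
    by (unfold cdot4; ring).
  unfold cdot4 at 1.
  apply is_C_derive_plus; [apply is_C_derive_plus; [apply is_C_derive_plus|]|]; apply Hsq; lia.
Qed.

Lemma is_C_derive_inversion (F : nat -> C -> C) (z : C) (l : nat -> C) :
  (forall k, (k < 4)%nat -> is_C_derive (F k) z (l k)) ->
  cdot4 (fun k => F k z) (fun k => F k z) <> 0 ->
  forall j, (j < 4)%nat ->
  is_C_derive (fun w => F j w / cdot4 (fun k => F k w) (fun k => F k w)) z
    (inversion_derivative (fun k => F k z) l j).
Proof.
  intros Hl HQ j Hj.
  assert (Hd := is_C_derive_mult _ _ _ _ _ (Hl j Hj)
                  (is_C_derive_inv _ _ _ (is_C_derive_cdot4_self F z l Hl) HQ)).
  unfold Cdiv. replace (inversion_derivative (fun k => F k z) l j) with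
    (l j * / cdot4 (fun k => F k z) (fun k => F k z) +
     F j z * (2 * cdot4 l (fun k => F k z) *
              - / (cdot4 (fun k => F k z) (fun k => F k z) * cdot4 (fun k => F k z) (fun k => F k z)))).
  - exact Hd.
  - unfold inversion_derivative. revert HQ.
    generalize (cdot4 (fun k => F k z) (fun k => F k z)) (cdot4 l (fun k => F k z)).
    intros q S Hq. field. exact Hq.
Qed.

End Inversion.

Section InvertedCurve.

Local Open Scope C_scope.

Variables (g h : nat -> R -> R -> R).

Definition Gvec (z : C) : nat -> C := fun k => cplx (g k) (h k) z.

Lemma bilG_cdot4 x y : bilG g h x y = cdot4 (Gvec (x, y)) (Gvec (x, y)).
Proof. reflexivity. Qed.

Lemma cplx_TG j z :
  cplx (TG_re g h j) (TG_im g h j) z = Gvec z j / cdot4 (Gvec z) (Gvec z).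
Proof.
  destruct z as [x y]. rewrite <- bilG_cdot4.
  unfold TG_re, TG_im, cdiv, Gvec, cplx. cbn [fst snd].
  destruct (bilG g h x y) as [b1 b2]. unfold Cdiv, Cinv, Cmult; cbn [fst snd].
  replace (b1 ^ 2 + b2 ^ 2)%R with (b1 * b1 + b2 * b2)%R by ring. f_equal; unfold Rdiv; ring.
Qed.

Lemma TG_isotropic_derivative (U : R -> R -> Prop) (gx gy : nat -> R -> R -> R) :
  holomorphic_on U g h ->
  (forall x y, U x y -> forall j, (j < 4)%nat ->
     partial_x (g j) x y (gx j x y) /\ partial_y (g j) x y (gy j x y)) ->
  (forall x y, U x y ->
     dot4 (fun j => gx j x y) (fun j => gx j x y) = dot4 (fun j => gy j x y) (fun j => gy j x y) /\
     dot4 (fun j => gx j x y) (fun j => gy j x y) = 0%R) ->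
  forall x y, nonisotropic_set U g h x y ->
  exists T : nat -> C,
    (forall j, (j < 4)%nat -> cdiff_at (TG_re g h j) (TG_im g h j) x y (fst (T j)) (snd (T j))) /\
    cdot4 T T = 0.
Proof.
  intros Hhol Hpar Hconf x y [Hxy HQ].
  set (l := fun k => (gx k x y, (- gy k x y)%R)).
  assert (Hl : forall k, (k < 4)%nat -> is_C_derive (fun w => Gvec w k) (x, y) (l k)).
  { intros k Hk. destruct (Hhol k Hk x y Hxy) as [a [b Hab]].
    destruct (cdiff_at_partials _ _ _ _ _ _ Hab) as [Ha [_ [Hb _]]].
    destruct (Hpar x y Hxy k Hk) as [Hgx Hgy].
    rewrite (uniqueness_limite _ _ _ _ Ha Hgx) in Hab.
    rewrite <- (Ropp_involutive b), (uniqueness_limite _ _ _ _ Hb Hgy) in Hab.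
    apply cdiff_at_iff, Hab. }
  rewrite bilG_cdot4 in HQ.
  exists (inversion_derivative (Gvec (x, y)) l). split.
  - intros j Hj. apply cdiff_at_iff. rewrite <- surjective_pairing.
    eapply is_derive_ext; [intros w; symmetry; apply cplx_TG|].
    exact (is_C_derive_inversion (fun k w => Gvec w k) (x, y) l Hl HQ j Hj).
  - rewrite cdot4_inversion_derivative by exact HQ.
    assert (Hiso : cdot4 l l = 0) by (apply cdot4_isotropic_iff_conformal, Hconf, Hxy).
    rewrite Hiso. unfold Cdiv. apply Cmult_0_l.
Qed.

End InvertedCurve.

Section InvertedCurveSmooth.

Variables (W : R -> R -> Prop) (g h : nat -> R -> R -> R).
Hypothesis g_smooth : forall j, (j < 4)%nat -> smooth_on W (g j).
Hypothesis h_smooth : forall j, (j < 4)%nat -> smooth_on W (h j).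

Definition bilG_norm2 (x y : R) : R :=
  fst (bilG g h x y) * fst (bilG g h x y) + snd (bilG g h x y) * snd (bilG g h x y).

Lemma bilG_norm2_neq0 x y : bilG_norm2 x y <> 0 <-> bilG g h x y <> (0, 0).
Proof.
  unfold bilG_norm2. destruct (bilG g h x y) as [a b]; cbn [fst snd]. split.
  - intros H E. injection E as -> ->. apply H. ring.
  - intros H E. apply H. f_equal; nra.
Qed.

Ltac smooth_on_ring :=
  repeat first [ apply smooth_on_plus | apply smooth_on_mult | apply smooth_on_opp
               | apply g_smooth; lia | apply h_smooth; lia ].

Lemma smooth_on_bilG :
  smooth_on W (fun x y => fst (bilG g h x y)) /\ smooth_on W (fun x y => snd (bilG g h x y)).
Proof. unfold bilG, cmul; cbn [fst snd]. split; smooth_on_ring. Qed.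

Lemma smooth_on_bilG_norm2 : smooth_on W bilG_norm2.
Proof.
  destruct smooth_on_bilG. unfold bilG_norm2.
  apply smooth_on_plus; apply smooth_on_mult; assumption.
Qed.

Lemma smooth_on_TG : (forall x y, W x y -> bilG g h x y <> (0, 0)) ->
  forall j, (j < 4)%nat -> smooth_on W (TG_re g h j) /\ smooth_on W (TG_im g h j).
Proof.
  intros Hn j Hj. destruct smooth_on_bilG as [B1 B2].
  assert (Hinv : smooth_on W (fun x y => / bilG_norm2 x y)).
  { apply smooth_on_inv; [apply smooth_on_bilG_norm2|]. intros x y Hxy; apply bilG_norm2_neq0, Hn, Hxy. }
  unfold TG_re, TG_im, cdiv; cbn [fst snd]. unfold Rdiv.
  split; apply smooth_on_mult; [smooth_on_ring | exact Hinv | smooth_on_ring | exact Hinv].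
Qed.

End InvertedCurveSmooth.

Lemma nonisotropic_set_open (U : R -> R -> Prop) (g h : nat -> R -> R -> R) :
  open2 U -> (forall j, (j < 4)%nat -> smooth_on U (g j)) ->
  (forall j, (j < 4)%nat -> smooth_on U (h j)) -> open2 (nonisotropic_set U g h).
Proof.
  intros HU Hg Hh.
  apply (open2_ext (fun x y => U x y /\ bilG_norm2 g h x y <> 0)).
  - intros x y. unfold nonisotropic_set. rewrite bilG_norm2_neq0. tauto.
  - apply open2_nonzero; [exact HU|]. intros x y Hxy.
    apply (smooth_on_cont2_at U); [apply smooth_on_bilG_norm2|]; auto.
Qed.

Definition partials_family (W : R -> R -> Prop) (D : list bool -> R -> R -> R) : Prop :=
  forall w x y, W x y ->
    partial_x (D w) x y (D (false :: w) x y) /\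
    partial_y (D w) x y (D (true :: w) x y) /\ cont2_at (D w) x y.

Section PartialsFamily.

Variables (N : R -> R -> Prop) (D : list bool -> R -> R -> R).
Hypothesis N_open : open2 N.
Hypothesis D_partials : partials_family N D.

Lemma Derive_x_family w a b : N a b -> Derive (fun t => D w t b) a = D (false :: w) a b.
Proof. intros H. apply is_derive_unique, is_derive_Reals, D_partials, H. Qed.

Lemma Derive_y_family w a b : N a b -> Derive (fun t => D w a t) b = D (true :: w) a b.
Proof. intros H. apply is_derive_unique, is_derive_Reals, D_partials, H. Qed.

Lemma is_derive_x_Derive_y_family w a b : N a b ->
  is_derive (fun z => Derive (fun t => D w z t) b) a (D (false :: true :: w) a b).
Proof.
  intros H. apply (is_derive_ext_loc (fun z => D (true :: w) z b)).
  - generalize (open2_locally_x N N_open a b H). apply filter_imp.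
    intros z Hz. symmetry. apply Derive_y_family, Hz.
  - apply is_derive_Reals, D_partials, H.
Qed.

Lemma is_derive_y_Derive_x_family w a b : N a b ->
  is_derive (fun z => Derive (fun t => D w t z) a) b (D (true :: false :: w) a b).
Proof.
  intros H. apply (is_derive_ext_loc (fun z => D (false :: w) a z)).
  - generalize (open2_locally_y N N_open a b H). apply filter_imp.
    intros z Hz. symmetry. apply Derive_x_family, Hz.
  - apply is_derive_Reals, D_partials, H.
Qed.

Lemma partials_family_mixed_comm x y : N x y ->
  D (false :: true :: nil) x y = D (true :: false :: nil) x y.
Proof.
  intros Hxy. assert (Hl := open2_locally_2d N N_open x y Hxy).
  rewrite <- (is_derive_unique _ _ _ (is_derive_x_Derive_y_family nil x y Hxy)).
  rewrite <- (is_derive_unique _ _ _ (is_derive_y_Derive_x_family nil x y Hxy)).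
  apply Schwarz.
  - eapply locally_2d_impl; [|exact Hl]. apply locally_2d_forall. intros a b Hab.
    split; [|split; [|split]]; eexists.
    + apply is_derive_Reals, (D_partials nil a b Hab).
    + apply is_derive_Reals, (D_partials nil a b Hab).
    + apply (is_derive_x_Derive_y_family nil a b Hab).
    + apply (is_derive_y_Derive_x_family nil a b Hab).
  - apply continuity_2d_pt_ext_loc with (f := D (false :: true :: nil)).
    + eapply locally_2d_impl; [|exact Hl]. apply locally_2d_forall. intros a b Hab.
      symmetry. apply is_derive_unique, (is_derive_x_Derive_y_family nil a b Hab).
    + apply cont2_at_iff, D_partials, Hxy.
  - apply continuity_2d_pt_ext_loc with (f := D (true :: false :: nil)).
    + eapply locally_2d_impl; [|exact Hl]. apply locally_2d_forall. intros a b Hab.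
      symmetry. apply is_derive_unique, (is_derive_y_Derive_x_family nil a b Hab).
    + apply cont2_at_iff, D_partials, Hxy.
Qed.

End PartialsFamily.

Lemma harmonic_of_cauchy_riemann (N : R -> R -> Prop) (Du Dv : list bool -> R -> R -> R) :
  open2 N -> partials_family N Du -> partials_family N Dv ->
  (forall x y, N x y -> Du (false :: nil) x y = Dv (true :: nil) x y /\
                        Du (true :: nil) x y = - Dv (false :: nil) x y) ->
  forall x y, N x y -> Du (false :: false :: nil) x y + Du (true :: true :: nil) x y = 0.
Proof.
  intros HN HDu HDv HCR x y Hxy.
  assert (Exx : Du (false :: false :: nil) x y = Dv (false :: true :: nil) x y).
  { apply (uniqueness_limite (fun t => Du (false :: nil) t y) x); [apply HDu, Hxy|].
    apply is_derive_Reals, (is_derive_ext_loc (fun t => Dv (true :: nil) t y)).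
    - generalize (open2_locally_x N HN x y Hxy). apply filter_imp.
      intros z Hz. symmetry. apply HCR, Hz.
    - apply is_derive_Reals, HDv, Hxy. }
  assert (Eyy : Du (true :: true :: nil) x y = - Dv (true :: false :: nil) x y).
  { apply (uniqueness_limite (fun t => Du (true :: nil) x t) y); [apply HDu, Hxy|].
    apply is_derive_Reals, (is_derive_ext_loc (fun t => - Dv (false :: nil) x t)).
    - generalize (open2_locally_y N HN x y Hxy). apply filter_imp.
      intros z Hz. symmetry. apply HCR, Hz.
    - apply (@is_derive_opp R_AbsRing R_NormedModule (fun t => Dv (false :: nil) x t)).
      apply is_derive_Reals, HDv, Hxy. }
  rewrite Exx, Eyy, (partials_family_mixed_comm N Dv HN HDv x y Hxy). ring.
Qed.

(* With [E = G] and [F = 0] the mean curvature numerator is [E (u_xx + u_yy)]. *)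
Lemma minimal_of_conformal_harmonic (ux uy uxx uxy uyy n : nat -> R) :
  dot4 ux ux = dot4 uy uy -> dot4 ux uy = 0 ->
  (forall j, (j < 4)%nat -> uxx j + uyy j = 0) ->
  dot4 n (fun j => dot4 uy uy * uxx j - 2 * dot4 ux uy * uxy j + dot4 ux ux * uyy j) = 0.
Proof.
  intros HE HF Hharm. rewrite HE, HF. unfold dot4.
  assert (Hneg : forall j, (j < 4)%nat -> uxx j = - uyy j)
    by (intros j Hj; specialize (Hharm j Hj); lra).
  rewrite !Hneg by lia.
  ring.
Qed.

Lemma choice_lt4 {A : Type} (P : nat -> A -> Prop) :
  (forall j, (j < 4)%nat -> exists a, P j a) ->
  exists f : nat -> A, forall j, (j < 4)%nat -> P j (f j).
Proof.
  intros H.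
  destruct (H 0%nat ltac:(lia)) as [a0 H0]. destruct (H 1%nat ltac:(lia)) as [a1 H1].
  destruct (H 2%nat ltac:(lia)) as [a2 H2]. destruct (H 3%nat ltac:(lia)) as [a3 H3].
  exists (fun j => match j with 0%nat => a0 | 1%nat => a1 | 2%nat => a2 | _ => a3 end).
  intros [|[|[|[|j]]]] Hj; auto; lia.
Qed.

Lemma cdot4_ext (u u' : nat -> C) :
  (forall j, (j < 4)%nat -> u j = u' j) -> cdot4 u u = cdot4 u' u'.
Proof. intros E. unfold cdot4. rewrite !E by lia. reflexivity. Qed.

Lemma conjugate_minimal_of_isotropic_holomorphic (N : R -> R -> Prop)
    (u v : nat -> R -> R -> R) :
  open2 N ->
  (forall j, (j < 4)%nat -> smooth_on N (u j)) ->
  (forall j, (j < 4)%nat -> smooth_on N (v j)) ->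
  (forall x y, N x y -> exists T : nat -> C,
     (forall j, (j < 4)%nat -> cdiff_at (u j) (v j) x y (fst (T j)) (snd (T j))) /\
     cdot4 T T = 0%C) ->
  conjugate_minimal (fun x y => N x y /\ regular_pt u x y) u v.
Proof.
  intros HN Hu Hv Hhol.
  destruct (choice_lt4 (fun j D => D nil = u j /\ partials_family N D)) as [DU HDU].
  { intros j Hj. destruct (Hu j Hj) as [D HD]. exists D. exact HD. }
  destruct (choice_lt4 (fun j D => D nil = v j /\ partials_family N D)) as [DV HDV].
  { intros j Hj. destruct (Hv j Hj) as [D HD]. exists D. exact HD. }
  assert (Hfirst : forall x y, N x y -> exists T : nat -> C,
    (forall j, (j < 4)%nat ->
       DU j (false :: nil) x y = fst (T j) /\ DU j (true :: nil) x y = - snd (T j) /\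
       DV j (false :: nil) x y = snd (T j) /\ DV j (true :: nil) x y = fst (T j)) /\
    cdot4 T T = 0%C).
  { intros x y Hxy. destruct (Hhol x y Hxy) as [T [HT Hiso]]. exists T. split; [|exact Hiso].
    intros j Hj. destruct (cdiff_at_partials _ _ _ _ _ _ (HT j Hj)) as [Pux [Pvx [Puy Pvy]]].
    destruct (HDU j Hj) as [U0 UD]. destruct (HDV j Hj) as [V0 VD].
    destruct (UD nil x y Hxy) as [Ux [Uy _]]. destruct (VD nil x y Hxy) as [Vx [Vy _]].
    rewrite U0 in Ux, Uy. rewrite V0 in Vx, Vy.
    repeat split; eapply uniqueness_limite; eauto. }
  assert (Hharm : forall j, (j < 4)%nat -> forall x y, N x y ->
            DU j (false :: false :: nil) x y + DU j (true :: true :: nil) x y = 0).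
  { intros j Hj. apply (harmonic_of_cauchy_riemann N (DU j) (DV j) HN (proj2 (HDU j Hj)) (proj2 (HDV j Hj))).
    intros x y Hxy. destruct (Hfirst x y Hxy) as [T [HT _]].
    destruct (HT j Hj) as [A [B [C' D']]]. split; lra. }
  assert (Hconf : forall x y, N x y ->
    let ux := fun j => DU j (false :: nil) x y in let uy := fun j => DU j (true :: nil) x y in
    dot4 ux ux = dot4 uy uy /\ dot4 ux uy = 0).
  { intros x y Hxy ux uy. destruct (Hfirst x y Hxy) as [T [HT Hiso]].
    apply cdot4_isotropic_iff_conformal. rewrite <- Hiso. apply cdot4_ext.
    intros j Hj. destruct (HT j Hj) as [A [B _]]. unfold ux, uy. rewrite A, B, Ropp_involutive.
    symmetry; apply surjective_pairing. }
  split; [split|split].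
  - intros j Hj. apply (smooth_on_subset N); [intros x y [H _]; exact H | apply Hu, Hj].
  - exists (fun j => DU j (false :: nil)), (fun j => DU j (true :: nil)),
      (fun j => DU j (false :: false :: nil)), (fun j => DU j (true :: false :: nil)),
      (fun j => DU j (true :: true :: nil)).
    intros x y [Hxy Hreg]. destruct (Hconf x y Hxy) as [HE HF].
    split; [|split; [|split; [exact HE|split; [exact HF|]]]].
    + intros j Hj. destruct (HDU j Hj) as [U0 UD]. rewrite <- U0.
      destruct (UD nil x y Hxy) as [Ux [Uy _]].
      destruct (UD (false :: nil) x y Hxy) as [Uxx [Uxy _]].
      destruct (UD (true :: nil) x y Hxy) as [_ [Uyy _]].
      repeat split; assumption.
    + intros a b Hab. destruct Hreg as [fx [fy [Hf Hinj]]]. apply Hinj.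
      intros j Hj. destruct (Hf j Hj) as [Fx Fy].
      destruct (HDU j Hj) as [U0 UD]. destruct (UD nil x y Hxy) as [Ux [Uy _]].
      rewrite U0 in Ux, Uy.
      rewrite (uniqueness_limite _ _ _ _ Fx Ux), (uniqueness_limite _ _ _ _ Fy Uy). apply Hab, Hj.
    + cbv zeta. intros n _ _. apply minimal_of_conformal_harmonic; auto.
  - intros j Hj. apply (smooth_on_subset N); [intros x y [H _]; exact H | apply Hv, Hj].
  - exists (-1). split; [right; reflexivity|].
    intros x y [Hxy _] j Hj dx dy Hdx Hdy.
    destruct (Hhol x y Hxy) as [T [HT _]].
    destruct (cdiff_at_partials _ _ _ _ _ _ (HT j Hj)) as [Pux [Pvx [Puy Pvy]]].
    rewrite (uniqueness_limite _ _ _ _ Hdx Pux), (uniqueness_limite _ _ _ _ Hdy Puy).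
    replace (-1 * - snd (T j)) with (snd (T j)) by ring.
    replace (- (-1 * fst (T j))) with (fst (T j)) by ring. split; assumption.
Qed.

Theorem corollary3 (U : R -> R -> Prop) (g h : nat -> R -> R -> R) :
  open2 U ->
  holomorphic_on U g h ->
  conjugate_minimal U g h ->
  open2 (nonisotropic_set U g h) /\
  holomorphic_on (nonisotropic_set U g h) (TG_re g h) (TG_im g h) /\
  conjugate_minimal
    (fun x y => nonisotropic_set U g h x y /\ regular_pt (TG_re g h) x y)
    (TG_re g h) (TG_im g h).
Proof.
  intros HU Hhol [[Hg [gx [gy [gxx [gxy [gyy Hgpt]]]]]] [Hh _]].
  set (N := nonisotropic_set U g h).
  assert (HN : open2 N) by (apply nonisotropic_set_open; assumption).
  assert (Hgx : forall x y, U x y -> forall j, (j < 4)%nat ->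
            partial_x (g j) x y (gx j x y) /\ partial_y (g j) x y (gy j x y)).
  { intros x y Hxy j Hj. destruct (proj1 (Hgpt x y Hxy) j Hj) as [Px [Py _]]. split; assumption. }
  assert (Hgconf : forall x y, U x y ->
            dot4 (fun j => gx j x y) (fun j => gx j x y) = dot4 (fun j => gy j x y) (fun j => gy j x y) /\
            dot4 (fun j => gx j x y) (fun j => gy j x y) = 0).
  { intros x y Hxy. destruct (Hgpt x y Hxy) as [_ [_ [HE [HF _]]]]. split; assumption. }
  assert (Hiso := TG_isotropic_derivative g h U gx gy Hhol Hgx Hgconf).
  assert (Hsub : forall x y, N x y -> U x y) by (intros x y [H _]; exact H).
  assert (Hsm := smooth_on_TG N g h
    (fun j Hj => smooth_on_subset U _ _ Hsub (Hg j Hj))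
    (fun j Hj => smooth_on_subset U _ _ Hsub (Hh j Hj)) (fun x y Hxy => proj2 Hxy)).
  split; [exact HN | split].
  - intros j Hj x y Hxy. destruct (Hiso x y Hxy) as [T [HT _]]. eauto.
  - apply conjugate_minimal_of_isotropic_holomorphic; [exact HN | | | exact Hiso];
      intros j Hj; apply Hsm, Hj.
Qed.
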